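(* Let $\Omega\subset\mathbb{R}^N$ ($N\ge2$) be a bounded smooth domain, $1<q<2$, $b\in C^\alpha(\overline\Omega)$ with $\Omega^b_+\neq\emptyset$ and $\int_\Omega b\le0$. For $\epsilon>0$ small (so that $\{b>\epsilon\}\neq\emptyset$), let $\lambda_\epsilon>0$ be the positive principal eigenvalue of $-\Delta\varphi=\lambda(b-\epsilon)\epsilon^{q-2}\varphi$ in $\Omega$, $\frac{\partial\varphi}{\partial\mathbf{n}}=0$ on $\partial\Omega$. Then $\lim_{\epsilon\to0^+}\lambda_\epsilon=0$.
   Context: $\Omega^b_+=\{x\in\Omega:b(x)>0\}$. A principal eigenvalue is one having a positive eigenfunction; for such $\epsilon$ the problem has exactly two principal eigenvalues, $0$ and $\lambda_\epsilon>0$. *)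

From HB Require Import structures.
From mathcomp Require Import all_boot all_order all_algebra.
From mathcomp Require Import all_classical all_reals all_analysis.
Set Implicit Arguments.
Unset Strict Implicit.
Unset Printing Implicit Defensive.
Import Order.TTheory GRing.Theory Num.Theory.
Import numFieldNormedType.Exports.
Local Open Scope classical_set_scope.
Local Open Scope ring_scope.

Definition partial {R : realType} {N : nat} (f : 'rV[R]_N -> R) (i : 'I_N)
  : 'rV[R]_N -> R := fun x => derive f x (delta_mx 0 i).

Definition laplacian {R : realType} {N : nat} (f : 'rV[R]_N -> R)
  : 'rV[R]_N -> R := fun x => \sum_(i < N) partial (partial f i) i x.

Fixpoint itpartial {R : realType} {N : nat} (f : 'rV[R]_N -> R) (s : seq 'I_N)
  : 'rV[R]_N -> R :=
  match s with
  | [::] => f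
  | i :: s' => partial (itpartial f s') i
  end.

Definition smooth {R : realType} {N : nat} (f : 'rV[R]_N -> R) : Prop :=
  forall (s : seq 'I_N) (x : 'rV[R]_N), differentiable (itpartial f s) x.

Definition dom_of {R : realType} {N : nat} (rho : 'rV[R]_N -> R) : set 'rV[R]_N :=
  [set x | rho x < 0].

(* Omega is a bounded smooth domain (open, connected, bounded) with
   boundary {rho = 0}, on which grad rho does not vanish. *)
Definition smooth_bounded_domain {R : realType} {N : nat}
  (rho : 'rV[R]_N -> R) : Prop :=
  [/\ smooth rho,
      (forall x, rho x = 0 -> exists i, partial rho i x != 0),
      bounded_set (dom_of rho) &
      connected (dom_of rho)].

Definition holder_on {R : realType} {N : nat} (alpha : R) (A : set 'rV[R]_N)
  (b : 'rV[R]_N -> R) : Prop :=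
  exists C : R, forall x y, A x -> A y -> `|b x - b y| <= C * (`|x - y| `^ alpha).

Definition setcoord {R : realType} {N : nat} (x : 'rV[R]_N) (k : nat) (t : R)
  : 'rV[R]_N := \row_j (if nat_of_ord j == k then t else x 0 j).

Fixpoint iter_int {R : realType} {N : nat} (k : nat) (f : 'rV[R]_N -> R)
  : 'rV[R]_N -> R :=
  match k with
  | 0 => f
  | k'.+1 => fun x =>
      Rintegral (@lebesgue_measure R) setT (fun t => iter_int k' f (setcoord x k' t))
  end.

(* Lebesgue integral over A of f in R^N, computed as an iterated integral
   (Fubini) of the zero extension of f outside A. *)
Definition integral_over {R : realType} {N : nat} (A : set 'rV[R]_N)
  (f : 'rV[R]_N -> R) : R :=
  iter_int N (fun x => if `[< A x >] then f x else 0) 0.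

(* lam is a principal eigenvalue of
     - Lap phi = lam (b - eps) eps^(q-2) phi in Omega,  d phi / dn = 0 on dOmega,
   i.e. there is a classical eigenfunction phi in C^2(Omega) cap C^1(closure Omega)
   that is positive in Omega. The outward normal is grad rho / |grad rho|, so
   the Neumann condition reads  grad phi . grad rho = 0  on {rho = 0}. *)
Definition neumann_principal_eigenvalue {R : realType} {N : nat}
  (rho : 'rV[R]_N -> R) (b : 'rV[R]_N -> R) (q eps lam : R) : Prop :=
  let Om := dom_of rho in
  exists phi : 'rV[R]_N -> R,
    [/\
        (forall x, Om x -> differentiable phi x /\
           forall i, differentiable (partial phi i) x /\
             forall j, {for x, continuous (partial (partial phi i) j)}),
        (* C^1 up to the boundary: phi and its gradient extend continuously *)
        {within closure Om, continuous phi},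
        (exists G : 'I_N -> 'rV[R]_N -> R,
           (forall i, {within closure Om, continuous (G i)}) /\
           (forall i x, Om x -> G i x = partial phi i x) /\
           (forall x, closure Om x -> rho x = 0 ->
              \sum_(i < N) G i x * partial rho i x = 0)),
        (forall x, Om x -> 0 < phi x) &
        (forall x, Om x ->
           - laplacian phi x = lam * (b x - eps) * (eps `^ (q - 2)) * phi x)].

(* Near a point where b > 0, the domain contains a cube Q of half-side r on
   which b > b(x)/2.  Let phi be a positive eigenfunction and
   psi(y) = prod_i cos (pi (y_i - c_i) / (2 r)), which vanishes on the boundary
   of Q.  At a maximum point of psi / phi, necessarily interior to Q, comparing
   the second derivatives of psi and phi (Barta's argument) gives a point of Q
   where lam (b - eps) eps^(q-2) <= N (pi / (2 r))^2.  Hence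
   lam <= C eps^(2-q), which tends to 0 since q < 2. *)

From HB Require Import structures.
From mathcomp Require Import all_boot all_order all_algebra.
From mathcomp Require Import all_classical all_reals all_analysis.
From mathcomp Require Import ring lra.
Import Order.TTheory GRing.Theory Num.Theory.
Import numFieldNormedType.Exports.
Local Open Scope classical_set_scope.
Local Open Scope ring_scope.

Set Implicit Arguments.
Unset Strict Implicit.
Unset Printing Implicit Defensive.

Section derivatives_on_lines.
Context {R : realType}.

Lemma is_derive_line (V : normedModType R) (F : V -> R) (a e : V) (t : R) :
  derivable F (a + t *: e) e ->
  is_derive t 1 (fun s => F (a + s *: e)) ('D_e F (a + t *: e)).
Proof.
move=> dF.
have quotE : (fun h : R => h^-1 *: (((fun s => F (a + s *: e)) \o shift t) (h *: 1)
                                    - F (a + t *: e)))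
   = (fun h => h^-1 *: ((F \o shift (a + t *: e)) (h *: e) - F (a + t *: e))).
  apply/funext => h /=; congr (_ *: (F _ - _)).
  by rewrite [h *: 1]mulr1 scalerDl addrCA !addrA.
by split; rewrite /derivable /derive quotE.
Qed.

Lemma is_derive_cos_affine (c w t : R) :
  is_derive t 1 (fun s : R => cos (c + s * w)) (- sin (c + t * w) * w).
Proof.
apply: (@is_derive1_comp _ cos (fun s => c + s * w)).
by apply: is_derive_eq; rewrite add0r mul1r scaler0 add0r [_%:A]mulr1.
Qed.

Lemma is_derive_sin_affine (c w t : R) :
  is_derive t 1 (fun s : R => sin (c + s * w)) (cos (c + t * w) * w).
Proof.
apply: (@is_derive1_comp _ sin (fun s => c + s * w)).
by apply: is_derive_eq; rewrite add0r mul1r scaler0 add0r [_%:A]mulr1.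
Qed.

End derivatives_on_lines.

Section second_derivative_test.
Context {R : realType}.

Lemma is_derive_gt0_right (f : R -> R) (x d : R) :
  is_derive x 1 f d -> 0 < d ->
  exists2 e, 0 < e & forall h, 0 < h < e -> f x < f (x + h).
Proof.
move=> [df <-] d_gt0.
have /cvgr_gt/(_ _ d_gt0) [e e_gt0 quot_gt0] := df.
exists e => // h /andP[h_gt0 h_lt].
have := quot_gt0 h; rewrite /= sub0r normrN gtr0_norm //.
move=> /(_ h_lt (lt0r_neq0 h_gt0)).
by rewrite [h%:A]mulr1 (addrC h) pmulr_rgt0 ?invr_gt0 // subr_gt0.
Qed.

Lemma local_max_derive2_le0 (g g' : R -> R) (eta d : R) : 0 < eta ->
  (forall t : R, `|t| < eta -> g t <= g 0) ->
  (forall t : R, `|t| < eta -> is_derive t 1 g (g' t)) ->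
  is_derive (0 : R) 1 g' d -> d <= 0.
Proof.
move=> eta_gt0 g_max dg dg'.
have in_eta t : t \in `](- eta), eta[ -> `|t| < eta.
  by rewrite in_itv /= ltr_norml.
have g'0 : g' 0 = 0.
  have zero_in : (0 : R) \in `](- eta), eta[ by rewrite in_itv /= oppr_lt0 eta_gt0.
  have [_ <-] := dg 0 (in_eta _ zero_in).
  have le_eta : - eta <= eta by rewrite -subr_ge0 opprK ltW // addr_gt0.
  have dg1 t : t \in `](- eta), eta[ -> derivable g t 1.
    by move=> /in_eta /dg [].
  have g_max1 t : t \in `](- eta), eta[ -> g t <= g 0.
    by move=> /in_eta; apply: g_max.
  by have [_ ->] := derive1_at_max le_eta dg1 zero_in g_max1.
rewrite leNgt; apply/negP => d_gt0.
have [e e_gt0 g'_gt0] := is_derive_gt0_right dg' d_gt0.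
pose t := Num.min e eta / 2.
have t_gt0 : 0 < t by rewrite divr_gt0 // lt_min e_gt0 eta_gt0.
have t_lt_e : t < e by have := ge_min e e eta; rewrite lexx /t; lra.
have t_lt_eta : t < eta by have := ge_min eta e eta; rewrite lexx orbT /t; lra.
have near0 s : s \in `[0, t] -> `|s| < eta.
  by rewrite in_itv /= => /andP[s_ge0 s_le]; rewrite ger0_norm // (le_lt_trans s_le).
have derivable_g s : s \in `[0, t] -> derivable g s 1 by move=> /near0 /dg [].
have [c c_in gtE] := MVT t_gt0 (fun s s_in => dg s (near0 s (subset_itv_oo_cc s_in)))
  (derivable_within_continuous derivable_g).
have c_gt0 : 0 < c by rewrite (itvP c_in).
have c_lt_e : c < e by rewrite (lt_trans _ t_lt_e) ?(itvP c_in).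
have g'c_gt0 : 0 < g' c by have := g'_gt0 c; rewrite g'0 add0r c_gt0 c_lt_e; apply.
have := g_max t; rewrite gtr0_norm // => /(_ t_lt_eta).
have : 0 < g' c * (t - 0) by rewrite subr0 mulr_gt0.
by rewrite -gtE; lra.
Qed.

End second_derivative_test.

Section cube.
Context {R : realType} {N : nat}.
Implicit Types (c x : 'rV[R]_N) (r w : R).

Definition cube c r : set 'rV[R]_N := [set x | forall i, `|x 0 i - c 0 i| <= r].

Lemma cube_center c r : 0 <= r -> cube c r c.
Proof. by move=> r_ge0 i; rewrite subrr normr0. Qed.

Lemma cube_compact c r : compact (cube c r).
Proof.
have -> : cube c r = [set x | forall i, `[c 0 i - r, c 0 i + r]%classic (x 0 i)].
  by apply/seteqP; split => x /= x_in i; have := x_in i; rewrite /= in_itv /= ler_distl.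
exact: (rV_compact (fun i => @segment_compact R _ _)).
Qed.

Lemma cube_norm c r x : 0 <= r -> cube c r x -> `|x - c| <= r.
Proof.
move=> r_ge0 x_in; rewrite [`|_|]mx_normrE.
apply: (big_ind (fun y => y <= r)) => // [y z|[i j] _]; first by rewrite ge_max => -> ->.
by rewrite /= (ord1 i) !mxE; exact: x_in.
Qed.

Lemma line_coord x i t j :
  (x + t *: delta_mx 0 i) 0 j = x 0 j + (if j == i then t else 0).
Proof. by rewrite !mxE eqxx /=; case: eqP => _; rewrite ?mulr1 ?mulr0. Qed.

Lemma cube_line c r x i t : cube c r x ->
  `|t| < r - `|x 0 i - c 0 i| -> cube c r (x + t *: delta_mx 0 i).
Proof.
move=> x_in t_lt j; rewrite line_coord.
case: eqP => [->|_]; last by rewrite addr0 x_in.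
rewrite addrAC; apply: le_trans (ler_normD _ _) _; lra.
Qed.

Definition cos_bump c w x := \prod_(i < N) cos (w * (x 0 i - c 0 i)).

Lemma cos_bump_center c w : cos_bump c w c = 1.
Proof. by rewrite /cos_bump big1 // => i _; rewrite subrr mulr0 cos0. Qed.

Lemma continuous_cos_bump c w : continuous (cos_bump c w).
Proof.
apply: continuous_big => // [|i _ x]; first exact: mul_continuous.
apply: (continuous_comp (f := fun x => w * (x 0 i - c 0 i))); last exact: continuous_cos.
apply: continuousM; first exact: cst_continuous.
by apply: continuousB; [exact: coord_continuous | exact: cst_continuous].
Qed.

Lemma cos_bump_line c w x i t :
  cos_bump c w (x + t *: delta_mx 0 i) =
  (\prod_(j < N | j != i) cos (w * (x 0 j - c 0 j))) *
  cos (w * (x 0 i - c 0 i) + t * w).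
Proof.
rewrite /cos_bump (bigD1 i) //= mulrC line_coord eqxx; congr (_ * cos _); last by ring.
by apply: eq_bigr => j /negbTE ji; rewrite line_coord ji addr0.
Qed.

Lemma cos_bump_eq0 c r x i : 0 < r -> `|x 0 i - c 0 i| = r ->
  cos_bump c (pi / (2 * r)) x = 0.
Proof.
move=> r_gt0 xi_r; apply/eqP; rewrite /cos_bump prodf_seq_eq0; apply/hasP.
exists i; rewrite ?mem_index_enum //=.
have wr : pi / (2 * r) * r = pi / 2 by field; rewrite lt0r_neq0.
have [xi_ge0|xi_lt0] := leP 0 (x 0 i - c 0 i).
  by move: xi_r; rewrite ger0_norm // => ->; rewrite wr cos_pihalf.
have -> : x 0 i - c 0 i = - r by rewrite -xi_r ltr0_norm // opprK.
by rewrite mulrN wr cosN cos_pihalf.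
Qed.

End cube.

Section barta.
Context {R : realType} {N : nat}.
Implicit Types (c x : 'rV[R]_N) (r w : R).

Lemma cos_bump_partial2_le c x w (v eta : R) (phi : 'rV[R]_N -> R) (i : 'I_N) :
  0 < eta ->
  (forall t : R, `|t| < eta ->
     cos_bump c w (x + t *: delta_mx 0 i) <= v * phi (x + t *: delta_mx 0 i)) ->
  cos_bump c w x = v * phi x ->
  (forall t : R, `|t| < eta -> differentiable phi (x + t *: delta_mx 0 i)) ->
  differentiable (partial phi i) x ->
  - w ^+ 2 * cos_bump c w x <= v * partial (partial phi i) i x.
Proof.
move=> eta_gt0 le_line eq_x dphi dphi_i.
set e : 'rV[R]_N := delta_mx 0 i.
set P := \prod_(j < N | j != i) cos (w * (x 0 j - c 0 j)).
set a := w * (x 0 i - c 0 i).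
have bumpE t : cos_bump c w (x + t *: e) = P * cos (a + t * w) := cos_bump_line c w x i t.
have bump0 : cos_bump c w x = P * cos a.
  by have := bumpE 0; rewrite scale0r addr0 mul0r addr0.
pose g s := P * cos (a + s * w) - v * phi (x + s *: e).
pose g' s := P * (- sin (a + s * w) * w) - v * partial phi i (x + s *: e).
have g_max t : `|t| < eta -> g t <= g 0.
  move=> t_lt; rewrite /g scale0r mul0r !addr0 -bump0 eq_x subrr.
  by rewrite subr_le0 -bumpE; exact: le_line.
have dg (t : R) : `|t| < eta -> is_derive t 1 g (g' t).
  move=> t_lt.
  have dcos := is_derive_cos_affine a w t.
  have dphi_t := is_derive_line (diff_derivable (v := e) (dphi t t_lt)).
  exact: (is_deriveB (is_deriveZ P dcos) (is_deriveZ v dphi_t)).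
have dg' : is_derive (0 : R) 1 g'
    (P * (- (cos a * w) * w) - v * 'D_e (partial phi i) x).
  have dsin := is_derive_sin_affine a w 0.
  rewrite mul0r addr0 in dsin.
  have dpartial := @is_derive_line _ _ (partial phi i) x e 0.
  rewrite scale0r addr0 in dpartial.
  have {}dpartial := dpartial (diff_derivable dphi_i).
  apply: (is_derive_eq (is_deriveB
    (is_deriveZ P (is_deriveM (is_deriveN dsin) (is_derive_cst w (0 : R) 1)))
    (is_deriveZ v dpartial))).
  by rewrite /cst scaler0 add0r /GRing.scale /=; ring.
have := local_max_derive2_le0 eta_gt0 g_max dg dg'.
have -> : P * (- (cos a * w) * w) = - w ^+ 2 * (P * cos a) by ring.
by rewrite bump0 subr_le0.
Qed.

Lemma cos_bump_ratio_max c r w (phi : 'rV[R]_N -> R) : 0 <= r ->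
  (forall x, cube c r x -> {for x, continuous phi} /\ 0 < phi x) ->
  exists2 x, cube c r x &
    forall y, cube c r y -> cos_bump c w y / phi y <= cos_bump c w x / phi x.
Proof.
move=> r_ge0 phi_cube.
have ratio_cont : {within cube c r, continuous (fun x => cos_bump c w x / phi x)}.
  apply: continuous_in_subspaceT => x /set_mem /phi_cube [phi_cont phi_gt0].
  apply: continuousM; first exact: continuous_cos_bump.
  exact: continuousV (lt0r_neq0 phi_gt0) phi_cont.
have cube_ne0 : cube c r !=set0 by exists c; exact: cube_center.
have [x /set_mem x_in x_max] := EVT_max_rV cube_ne0 (@cube_compact _ _ c r) ratio_cont.
by exists x => // y y_in; apply: x_max; apply/mem_set.
Qed.

Lemma barta_cube c r (phi K : 'rV[R]_N -> R) : 0 < r ->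
  (forall x, cube c r x ->
     [/\ differentiable phi x, (forall i, differentiable (partial phi i) x),
         0 < phi x & - laplacian phi x = K x * phi x]) ->
  exists2 x, cube c r x & K x <= N%:R * (pi / (2 * r)) ^+ 2.
Proof.
move=> r_gt0 phi_cube; set w := pi / (2 * r).
have phi_gt0 x : cube c r x -> 0 < phi x by case/phi_cube.
have [x x_in x_max] := @cos_bump_ratio_max c r w phi (ltW r_gt0)
  (fun x x_in => let: And4 dphi _ phix _ := phi_cube x x_in in
                 conj (differentiable_continuous dphi) phix).
set v := cos_bump c w x / phi x.
have [dphi dphi2 phix_gt0 eq_x] := phi_cube x x_in.
have bump_x : cos_bump c w x = v * phi x by rewrite /v divfK // lt0r_neq0.
have v_gt0 : 0 < v.
  apply: lt_le_trans (x_max c (cube_center c (ltW r_gt0))).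
  by rewrite cos_bump_center mul1r invr_gt0; apply/phi_gt0/cube_center/ltW.
have inside i : `|x 0 i - c 0 i| < r.
  rewrite lt_neqAle x_in andbT; apply/eqP => x_bd.
  by move: v_gt0; rewrite /v (cos_bump_eq0 r_gt0 x_bd) mul0r ltxx.
have coord i : - w ^+ 2 * cos_bump c w x <= v * partial (partial phi i) i x.
  have line_in t : `|t| < r - `|x 0 i - c 0 i| -> cube c r (x + t *: delta_mx 0 i).
    exact: cube_line.
  have eta_gt0 : 0 < r - `|x 0 i - c 0 i| by rewrite subr_gt0.
  apply: (cos_bump_partial2_le eta_gt0 _ bump_x _ (dphi2 i)).
  - move=> t /line_in y_in; rewrite -ler_pdivrMr ?phi_gt0 //; exact: x_max.
  - by move=> t /line_in /phi_cube [].
exists x => //.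
have : \sum_(i < N) - w ^+ 2 * cos_bump c w x
       <= \sum_(i < N) v * partial (partial phi i) i x by apply: ler_sum => i _.
rewrite sumr_const card_ord -mulr_sumr -/(laplacian phi x) -mulr_natr.
rewrite -[laplacian phi x]opprK eq_x bump_x => sum_le.
have vphi_gt0 : 0 < v * phi x by rewrite mulr_gt0.
by rewrite -(ler_pM2r vphi_gt0); nra.
Qed.

End barta.

Section near_a_point_of_positivity.
Context {R : realType} {N : nat}.

Lemma holder_on_near (alpha : R) (A : set 'rV[R]_N) (b : 'rV[R]_N -> R) x e :
  0 < alpha -> holder_on alpha A b -> A x -> 0 < e ->
  \forall y \near x, A y -> `|b y - b x| < e.
Proof.
move=> alpha_gt0 [C holder] Ax e_gt0.
have C1_gt0 : 0 < `|C| + 1 by rewrite ltr_wpDl.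
have eC_gt0 : 0 < e / (`|C| + 1) by rewrite divr_gt0.
have [r [r_gt0 r_small]] : exists r : R, 0 < r /\ r `^ alpha < e / (`|C| + 1).
  apply: (@filter_ex _ (0 : R)^'+); near=> r; split; first by near: r; exact: nbhs_right_gt.
  by near: r; exact: (cvgr_lt _ (powR_cvg0 alpha_gt0)).
apply/nbhs_ballP; exists r => // y; rewrite -ball_normE /= distrC => /ltW yx_le Ay.
apply: le_lt_trans (holder y x Ay Ax) _.
apply: le_lt_trans (_ : `|C| * (e / (`|C| + 1)) < e).
  apply: le_trans (ler_wpM2r (powR_ge0 _ _) (ler_norm C)) _.
  apply: ler_wpM2l => //; apply/ltW/le_lt_trans/r_small.
  by apply: ge0_ler_powR; rewrite // ?nnegrE // ltW.
by rewrite mulrCA gtr_pMr // ltr_pdivrMr // mul1r ltrDl.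
Unshelve. all: by end_near.
Qed.

Lemma dom_of_nbhs (rho : 'rV[R]_N -> R) x : smooth rho -> dom_of rho x ->
  \forall y \near x, dom_of rho y.
Proof.
move=> rho_smooth rho_x_lt0.
exact: cvgr_lt (differentiable_continuous (rho_smooth [::] x)) _ rho_x_lt0.
Qed.

Lemma exists_cube_in_dom_gt_half (rho b : 'rV[R]_N -> R) (alpha : R) x :
  smooth rho -> 0 < alpha -> holder_on alpha (closure (dom_of rho)) b ->
  dom_of rho x -> 0 < b x ->
  exists2 r, 0 < r & forall y, cube x r y -> dom_of rho y /\ b x / 2 < b y.
Proof.
move=> rho_smooth alpha_gt0 b_holder Dx bx_gt0.
have bx2_gt0 : 0 < b x / 2 by rewrite divr_gt0.
have near_x : \forall y \near x, dom_of rho y /\ b x / 2 < b y.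
  have b_near := holder_on_near alpha_gt0 b_holder (subset_closure Dx) bx2_gt0.
  near=> y; have Dy : dom_of rho y by near: y; exact: dom_of_nbhs.
  split => //; suff : `|b y - b x| < b x / 2 by rewrite ltr_norml; lra.
  by move: Dy => /subset_closure; near: y.
have [r /= r_gt0 ball_sub] := (nbhs_ballP _ _).1 near_x.
exists (r / 2) => [|y y_cube]; first by rewrite divr_gt0.
apply: ball_sub; rewrite -ball_normE /= distrC.
by apply: le_lt_trans (cube_norm _ y_cube) _; lra.
Unshelve. all: by end_near.
Qed.

End near_a_point_of_positivity.

Lemma cvg_right0_powR_bound {R : realType} (f : R -> R) (C p : R) : 0 < p ->
  (\forall e \near 0^'+, 0 <= f e <= C * e `^ p) -> f e @[e --> 0^'+] --> 0.
Proof.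
move=> p_gt0 f_bound.
apply: (@squeeze_cvgr _ _ _ _ (fun=> 0) (fun e => C * e `^ p) _ f_bound); first exact: cvg_cst.
by have := cvgM (cvg_cst C) (powR_cvg0 p_gt0); rewrite mulr0; apply; exact: _.
Qed.

Lemma ler_div_powR {R : realType} (lam k x p M : R) : 0 < k -> 0 < x ->
  lam * k * x `^ (- p) <= M -> lam <= M / k * x `^ p.
Proof.
move=> k_gt0 x_gt0; have xp_gt0 : 0 < x `^ p by rewrite powR_gt0.
have -> : M / k * x `^ p = M / (k * (x `^ p)^-1) by field; rewrite !lt0r_neq0.
by rewrite powRN ler_pdivlMr ?mulr_gt0 ?invr_gt0 // mulrA.
Qed.

Theorem lemma6p6 (R : realType) (N : nat) (rho : 'rV[R]_N -> R)
  (q alpha : R) (b : 'rV[R]_N -> R) (lam : R -> R) :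
  (2 <= N)%N ->
  smooth_bounded_domain rho ->
  1 < q -> q < 2 ->
  0 < alpha -> alpha < 1 ->
  holder_on alpha (closure (dom_of rho)) b ->
  (exists x, dom_of rho x /\ 0 < b x) ->
  integral_over (dom_of rho) b <= 0 ->
  (exists e0 : R, 0 < e0 /\ forall eps, 0 < eps -> eps < e0 ->
       (exists x, dom_of rho x /\ eps < b x) /\
       0 < lam eps /\ neumann_principal_eigenvalue rho b q eps (lam eps)) ->
  lam eps @[eps --> 0^'+] --> 0.
Proof.
move=> _ [rho_smooth _ _ _] _ q_lt2 alpha_gt0 _ b_holder [x [Dx bx_gt0]] _ [e0 [e0_gt0 eigen]].
have [r r_gt0 cube_x] := exists_cube_in_dom_gt_half rho_smooth alpha_gt0 b_holder Dx bx_gt0.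
have bx4_gt0 : 0 < b x / 4 by rewrite divr_gt0.
pose M := N%:R * (pi / (2 * r)) ^+ 2.
apply: (@cvg_right0_powR_bound _ lam (M / (b x / 4)) (2 - q)); first by rewrite subr_gt0.
near=> eps.
have eps_gt0 : 0 < eps by near: eps; exact: nbhs_right_gt.
have eps_lt : eps < e0 by near: eps; exact: nbhs_right_lt.
have [_ [lam_gt0 [phi [phi_C2 _ _ phi_gt0 phi_eq]]]] := eigen eps eps_gt0 eps_lt.
have phi_cube y : cube x r y -> [/\ differentiable phi y,
    (forall i, differentiable (partial phi i) y), 0 < phi y &
    - laplacian phi y = lam eps * (b y - eps) * eps `^ (q - 2) * phi y].
  move=> /cube_x[Dy _]; have [dphi dphi2] := phi_C2 y Dy.
  by split; [|move=> i; case: (dphi2 i)|exact: phi_gt0|exact: phi_eq].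
have [y /cube_x[_ by_gt] K_le] := barta_cube r_gt0 phi_cube.
rewrite ltW //=; apply: ler_div_powR; rewrite ?opprB //.
apply: le_trans K_le; rewrite ler_pM2r ?powR_gt0 // ler_pM2l //.
have : eps < b x / 4 by near: eps; exact: nbhs_right_lt.
lra.
Unshelve. all: by end_near.
Qed.
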